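(* For every $J\subseteq[n]$ and every $j\in J$, the polynomial $\partial_j h^2_{n-|J|+1}(J)$ lies in the ideal $\mathcal I_J=(p_{J,1},\dots,p_{J,n})\subseteq\mathbb C[x_1,\dots,x_n]$.
   Context: $\partial_j=\partial/\partial x_j$. For $S\subseteq[n]$ and an integer $r$, $h^2_r(S)$ is the complete homogeneous symmetric polynomial of degree $r$ in the variables $\{x_s^2:s\in S\}$ (with $h^2_0(S)=1$, $h^2_r(S)=0$ for $r<0$). For $J\subseteq[n]$ and $i\in[n]$ put $r_i=n-|J\cup\{i,\dots,n\}|+1$ and define $p_{J,i}=h^2_{r_i}(J\cup\{i,\dots,n\})$ if $i\notin J$, and $p_{J,i}=\partial_i h^2_{r_i}(J\cup\{i,\dots,n\})$ if $i\in J$. *)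

From HB Require Import structures.
From mathcomp Require Import all_boot all_order all_algebra.
From mathcomp Require Import complex Rstruct.
From mathcomp Require Import mpoly.

Set Implicit Arguments.
Unset Strict Implicit.
Unset Printing Implicit Defensive.

Import Order.TTheory GRing.Theory Num.Theory.
Local Open Scope ring_scope.

Definition C : fieldType := (Rdefinitions.R)[i].

(* Polynomial ring C[x_1,...,x_n]; variable x_{k+1} is 'X_k, k : 'I_n. *)
Notation Cpoly n := {mpoly C[n]}.

(* h^2_r(S): complete homogeneous symmetric polynomial of degree r in the
   variables {x_s^2 : s in S}, i.e. the sum over all exponent vectors m of
   total degree r supported in S of prod_s (x_s^2)^(m s).  (h^2_0(S) = 1.) *)
Definition h2 (n : nat) (r : nat) (S : {set 'I_n}) : Cpoly n :=
  \sum_(m : 'X_{1..n < r.+1} |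
          (mdeg m == r) && [forall s : 'I_n, (m s != 0%N) ==> (s \in S)])
     \prod_(s < n) ('X_s ^+ 2) ^+ (m s).

(* The set {i, ..., n} (1-based), i.e. {k : 'I_n | i <= k} (0-based). *)
Definition tail_set (n : nat) (i : 'I_n) : {set 'I_n} := [set k : 'I_n | (i <= k)%N].

(* r_i = n - |J u {i,...,n}| + 1  (always >= 1, so nat arithmetic is exact). *)
Definition r_idx (n : nat) (J : {set 'I_n}) (i : 'I_n) : nat :=
  (n - #|J :|: tail_set i|).+1.

Definition pJ (n : nat) (J : {set 'I_n}) (i : 'I_n) : Cpoly n :=
  if i \in J then (h2 (r_idx J i) (J :|: tail_set i))^`M(i)
  else h2 (r_idx J i) (J :|: tail_set i).

Definition in_ideal (n : nat) (g : 'I_n -> Cpoly n) (f : Cpoly n) : Prop :=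
  exists c : 'I_n -> Cpoly n, f = \sum_(i < n) c i * g i.

Definition I_J (n : nat) (J : {set 'I_n}) (f : Cpoly n) : Prop :=
  in_ideal (pJ J) f.

From HB Require Import structures.
From mathcomp Require Import all_boot all_order all_algebra.
From mathcomp Require Import complex Rstruct.
From mathcomp Require Import mpoly.
From mathcomp Require Import zify.
Set Implicit Arguments.
Unset Strict Implicit.
Unset Printing Implicit Defensive.
Import Order.TTheory GRing.Theory Num.Theory.
Local Open Scope ring_scope.

(* Put X_k = J u {k,...,n} and r_k = n - |X_k| + 1, so that p_{J,k} is
   h^2_{r_k}(X_k) when k is not in J.  We show that d_j h^2_{r_k}(X_k) lies in
   I_J for k = j, ..., n+1; for k = j it is the generator p_{J,j}, and for
   k = n+1 it is the claim since X_{n+1} = J.  If k is in J then X_{k+1} = X_k.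
   Otherwise X_k = {k} u X_{k+1}, r_{k+1} = r_k + 1, and the recurrence
   h^2_{r+1}(S u {a}) = h^2_{r+1}(S) + x_a^2 h^2_r(S u {a}), applied once with
   a = k and once with a = j, yields
     d_j h^2_{r+1}(X_{k+1}) = 2 x_j h^2_r(X_k) + (x_j^2 - x_k^2) d_j h^2_r(X_k),
   whose two terms lie in I_J, the first because h^2_r(X_k) = p_{J,k}. *)

Section Multinom.
Variable n : nat.
Implicit Types (m mu : 'X_{1..n}).

Definition mnm_half mu : 'X_{1..n} := [multinom (mu i)./2 | i < n].

Lemma mnm_halfK mu : (forall i, ~~ odd (mu i)) -> (mnm_half mu *+ 2)%MM = mu.
Proof.
move=> even_mu; apply/mnmP => i; rewrite mulmnE mnmE.
by rewrite -{2}(odd_double_half (mu i)) (negbTE (even_mu i)) add0n -muln2.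
Qed.

Lemma mulmn2_inj : injective (fun m : 'X_{1..n} => (m *+ 2)%MM).
Proof. by move=> m m' /mnmP eq_m2; apply/mnmP => i; have := eq_m2 i; rewrite !mulmnE; lia. Qed.

End Multinom.

Section MPolyX2.
Variables (R : comNzRingType) (n : nat).

Lemma mpolyX2 (a : 'I_n) : ('X_a : {mpoly R[n]}) ^+ 2 = 'X_[(U_(a) *+ 2)%MM].
Proof. by rewrite mpolyXn. Qed.

Lemma mpolyX_prod2 (m : 'X_{1..n}) :
  \prod_(s < n) (('X_s : {mpoly R[n]}) ^+ 2) ^+ (m s) = 'X_[(m *+ 2)%MM].
Proof. by rewrite mpolyXE_id; apply: eq_bigr => s _; rewrite mulmnE -exprM mulnC. Qed.

Lemma mcoeffXM (w mu : 'X_{1..n}) (p : {mpoly R[n]}) :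
  ('X_[w] * p)@_mu = if (w <= mu)%MM then p@_(mu - w)%MM else 0.
Proof.
case: ifP => w_le_mu; first by rewrite mulrC -{1}(submK w_le_mu) addmC mcoeffMX.
rewrite {1}(mpolyE p) mulr_sumr raddf_sum /=; apply: big1 => k _.
rewrite -scalerAr -mpolyXD mcoeffZ mcoeffX.
case: eqP => [e|_]; last by rewrite mulr0.
by move/negP: w_le_mu; rewrite -e; case; apply/mnm_lepP => i; rewrite mnmDE leq_addr.
Qed.

Lemma mderivX2 (a j : 'I_n) :
  (('X_a : {mpoly R[n]}) ^+ 2)^`M(j) = if a == j then 2%:R * 'X_j else 0.
Proof.
rewrite mpolyX2 mderivX mulmnE mnm1E.
case: (eqVneq a j) => [->|_]; last by rewrite mul0n scale0r.
rewrite mul1n -mul_mpolyC mpolyC_nat; congr (_ * 'X_[_]).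
by apply/mnmP => i; rewrite mnmBE mulmnE mnm1E; case: (j == i).
Qed.

End MPolyX2.

Section H2.
Variable n : nat.
Implicit Types (S : {set 'I_n}) (m mu : 'X_{1..n}).

Definition h2_exponent r S mu : bool :=
  (mdeg mu == r.*2)%N && [forall s, ~~ odd (mu s) && ((mu s != 0%N) ==> (s \in S))].

Lemma h2_exponent_double r S m :
  h2_exponent r S (m *+ 2)%MM =
    (mdeg m == r) && [forall s, (m s != 0%N) ==> (s \in S)].
Proof.
rewrite /h2_exponent mdegMn -muln2 eqn_pmul2r //; congr andb.
by apply: eq_forallb => s; rewrite mulmnE oddM andbF muln_eq0 orbF.
Qed.

Lemma h2_coeff r S mu : (h2 r S)@_mu = (h2_exponent r S mu)%:R.
Proof.
rewrite /h2 raddf_sum /=.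
under eq_bigr => m _ do rewrite mpolyX_prod2 mcoeffX.
case h2mu: (h2_exponent r S mu); last first.
  apply: big1 => m Pm; case: eqP => // m2E.
  by move: h2mu; rewrite -m2E h2_exponent_double Pm.
have halfK : (mnm_half mu *+ 2)%MM = mu.
  by apply: mnm_halfK => i; case/andP: h2mu => _ /forallP /(_ i) /andP[].
move: h2mu; rewrite -halfK h2_exponent_double => /andP[/eqP deg_half supp_half].
have half_bounded : (mdeg (mnm_half mu) < r.+1)%N by rewrite deg_half.
rewrite (bigD1 (BMultinom half_bounded)) /=; last by rewrite deg_half eqxx.
rewrite eqxx big1 ?addr0 // => m /andP[_ m_neq]; case: eqP => // /mulmn2_inj m_half.
by move: m_neq; rewrite -(inj_eq val_inj) /= m_half eqxx.
Qed.

Lemma h2_exponent_notin r S mu (a : 'I_n) :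
  a \notin S -> mu a != 0%N -> h2_exponent r S mu = false.
Proof.
move=> aNS mu_a; apply/negbTE/negP => /andP[_ /forallP /(_ a) /andP[_]].
by rewrite mu_a (negbTE aNS).
Qed.

Lemma h2_exponent_setU1_small r S mu (a : 'I_n) :
  a \notin S -> (mu a < 2)%N -> h2_exponent r (a |: S) mu = h2_exponent r S mu.
Proof.
move=> aNS mu_a_small; congr andb; apply: eq_forallb => s; rewrite !inE.
case: (eqVneq s a) => [->|] //=; rewrite (negbTE aNS).
by case: (mu a) mu_a_small => [|[|]].
Qed.

Lemma lepm_U2 (a : 'I_n) mu : (U_(a) *+ 2 <= mu)%MM = (2 <= mu a)%N.
Proof.
apply/mnm_lepP/idP => [/(_ a)|mu_a i]; first by rewrite mulmnE mnm1E eqxx.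
by rewrite mulmnE mnm1E; case: (eqVneq a i) => [<-|].
Qed.

Lemma h2_exponent_setU1_big r S mu (a : 'I_n) : (2 <= mu a)%N ->
  h2_exponent r.+1 (a |: S) mu = h2_exponent r (a |: S) (mu - U_(a) *+ 2)%MM.
Proof.
move=> mu_a_big; have le_mu : (U_(a) *+ 2 <= mu)%MM by rewrite lepm_U2.
congr andb.
  have := mdegD (mu - U_(a) *+ 2)%MM (U_(a) *+ 2)%MM.
  rewrite submK // mdegMn mdeg1 => ->; apply/eqP/eqP; rewrite doubleS; lia.
apply: eq_forallb => s; rewrite mnmBE mulmnE mnm1E !inE.
case: (eqVneq a s) => [<-|a_neq_s] /=; last by rewrite mul0n subn0.
by rewrite oddB // addbF !implybT.
Qed.

Lemma h2_setU1 q S (a : 'I_n) : a \notin S ->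
  h2 q.+1 (a |: S) = h2 q.+1 S + 'X_a ^+ 2 * h2 q (a |: S).
Proof.
move=> aNS; apply/mpolyP => mu.
rewrite mcoeffD mpolyX2 mcoeffXM lepm_U2 !h2_coeff.
case: ltnP => [mu_a_big|mu_a_small].
  have mu_a_neq0 : mu a != 0%N by rewrite -lt0n ltnW.
  by rewrite (h2_exponent_notin _ aNS) // add0r h2_exponent_setU1_big.
by rewrite addr0 h2_exponent_setU1_small.
Qed.

Lemma mderiv_h2_notin q S (j : 'I_n) : j \notin S -> (h2 q S)^`M(j) = 0.
Proof.
move=> jNS; apply/mpolyP => mu.
rewrite mcoeff_deriv h2_coeff mcoeff0 (h2_exponent_notin _ jNS) ?mul0rn //.
by rewrite mnmDE mnm1E eqxx addn1.
Qed.

Lemma mderiv_h2_mem q S (j : 'I_n) : j \in S ->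
  (h2 q.+1 S)^`M(j) = 2%:R * 'X_j * h2 q S + 'X_j ^+ 2 * (h2 q S)^`M(j).
Proof.
move=> jS; have jNSj : j \notin S :\ j by rewrite setD11.
have := h2_setU1 q jNSj; rewrite setD1K // => ->.
by rewrite mderivD mderiv_h2_notin ?setD11 // add0r mderivM mderivX2 eqxx.
Qed.

Lemma mderiv_h2_setU1 q S (a j : 'I_n) : a \notin S -> j \in S ->
  (h2 q.+1 S)^`M(j) =
    2%:R * 'X_j * h2 q (a |: S) + ('X_j ^+ 2 - 'X_a ^+ 2) * (h2 q (a |: S))^`M(j).
Proof.
move=> aNS jS; have jaS : j \in a |: S by rewrite setU1r.
have a_neq_j : a != j by apply: contraNneq aNS => ->.
have -> : h2 q.+1 S = h2 q.+1 (a |: S) - 'X_a ^+ 2 * h2 q (a |: S).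
  by rewrite h2_setU1 // addrK.
rewrite mderivB mderiv_h2_mem // mderivM mderivX2 (negbTE a_neq_j) mul0r add0r.
by rewrite mulrBl addrA.
Qed.

End H2.

Section Ideal.
Variables (n : nat) (g : 'I_n -> Cpoly n).

Lemma in_ideal_gen i : in_ideal g (g i).
Proof.
exists (fun k => (k == i)%:R); rewrite (bigD1 i) //= eqxx mul1r big1 ?addr0 //.
by move=> k /negbTE ->; rewrite mul0r.
Qed.

Lemma in_idealD f1 f2 : in_ideal g f1 -> in_ideal g f2 -> in_ideal g (f1 + f2).
Proof.
move=> [c1 ->] [c2 ->]; exists (fun i => c1 i + c2 i).
by rewrite -big_split; apply: eq_bigr => i _; rewrite mulrDl.
Qed.

Lemma in_idealMl p f : in_ideal g f -> in_ideal g (p * f).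
Proof.
move=> [c ->]; exists (fun i => p * c i).
by rewrite mulr_sumr; apply: eq_bigr => i _; rewrite mulrA.
Qed.

End Ideal.

Section TailChain.
Variables (n : nat) (J : {set 'I_n}) (j : 'I_n).
Hypothesis jJ : j \in J.

(* 0-based: for i : 'I_n, Jtail i is J :|: tail_set i, hence pJ J i is
   h2 (rtail i) (Jtail i) or its i-th derivative, by conversion. *)
Definition Jtail (k : nat) : {set 'I_n} := J :|: [set i : 'I_n | (k <= i)%N].

Definition rtail (k : nat) : nat := (n - #|Jtail k|).+1.

Lemma Jtail_n : Jtail n = J.
Proof. by apply/setP => i; rewrite !inE leqNgt ltn_ord orbF. Qed.

Lemma JtailS (k : nat) (lt_kn : (k < n)%N) : Jtail k = Ordinal lt_kn |: Jtail k.+1.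
Proof.
apply/setP => i; rewrite !inE leq_eqVlt orbCA; congr (_ || _).
by rewrite -val_eqE /= eq_sym.
Qed.

Lemma mderiv_h2_JtailS (k : nat) (lt_kn : (k < n)%N) :
  I_J J ((h2 (rtail k) (Jtail k))^`M(j)) ->
  I_J J ((h2 (rtail k.+1) (Jtail k.+1))^`M(j)).
Proof.
set a := Ordinal lt_kn; have Jtail_k := JtailS lt_kn; rewrite -/a in Jtail_k.
case: (boolP (a \in J)) => [aJ|aNJ].
  have Jtail_eq : Jtail k = Jtail k.+1.
    by rewrite Jtail_k; apply/setUidPr; rewrite sub1set !inE aJ.
  by rewrite /rtail Jtail_eq.
have aNJtail : a \notin Jtail k.+1 by rewrite !inE negb_or aNJ /= -ltnNge.
have rtail_k : rtail k.+1 = (rtail k).+1.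
  have := max_card (mem (Jtail k)); rewrite card_ord /rtail Jtail_k cardsU1 aNJtail.
  by move=> ?; lia.
have h2_gen : I_J J (h2 (rtail k) (Jtail k)).
  by have := in_ideal_gen (pJ J) a; rewrite /pJ (negbTE aNJ).
move=> IH; rewrite rtail_k (mderiv_h2_setU1 _ aNJtail) ?inE ?jJ // -Jtail_k.
by apply: in_idealD; apply: in_idealMl.
Qed.

Lemma mderiv_h2_Jtail (d : nat) : (j + d <= n)%N ->
  I_J J ((h2 (rtail (j + d)) (Jtail (j + d)))^`M(j)).
Proof.
elim: d => [|d IHd] le_jd_n.
  by have := in_ideal_gen (pJ J) j; rewrite /pJ jJ addn0.
have lt_jd_n : (j + d < n)%N by rewrite -addnS.
by rewrite addnS; apply/mderiv_h2_JtailS/IHd/ltnW.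
Qed.

End TailChain.

Theorem mainTheorem4 (n : nat) (J : {set 'I_n}) (j : 'I_n) :
  j \in J -> I_J J ((h2 (n - #|J|).+1 J)^`M(j)).
Proof.
move=> jJ; have le_jn : (j <= n)%N by apply: ltnW.
have := mderiv_h2_Jtail jJ (d := n - j); rewrite subnKC // => /(_ (leqnn n)).
by rewrite /rtail Jtail_n.
Qed.
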